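(* Let $0\le\lambda<1$ and $N=1$. Then for $0\le\delta\le1$, $$\zeta(1,\delta,\lambda)=\max\Big\{0,\frac{\lambda(\delta-\lambda)}{1-\lambda},\frac{\delta(2-\lambda)-1}{1-\lambda}\Big\}=\begin{cases}0,&0\le\delta\le\lambda,\\ \frac{\lambda(\delta-\lambda)}{1-\lambda},&\lambda\le\delta\le\frac{1+\lambda}{2},\\ \frac{\delta(2-\lambda)-1}{1-\lambda},&\frac{1+\lambda}{2}\le\delta\le1.\end{cases}$$
   Context: Let $\mathcal H$ be a Hilbert space of finite dimension $D\ge 2$ and $|\Psi\rangle\in\mathcal H$ a unit vector. For $0\le\lambda<1$ let $\Omega_\lambda=|\Psi\rangle\langle\Psi|+\lambda(1-|\Psi\rangle\langle\Psi|)$. For an integer $N\ge1$ and a density operator $\rho$ on $\mathcal H^{\otimes(N+1)}$ put $p_\rho=\mathrm{tr}[(\Omega_\lambda^{\otimes N}\otimes 1)\rho]$ and $f_\rho=\mathrm{tr}[(\Omega_\lambda^{\otimes N}\otimes|\Psi\rangle\langle\Psi|)\rho]$, and $\zeta(N,\delta,\lambda)=\min\{f_\rho:p_\rho\ge\delta\}$, the minimum over permutation-invariant density operators on $\mathcal H^{\otimes(N+1)}$. *)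

From mathcomp Require Import all_boot all_order all_algebra.
From mathcomp Require Import reals complex mxtens.
Set Implicit Arguments. Unset Strict Implicit. Unset Printing Implicit Defensive.
Import Order.TTheory GRing.Theory Num.Theory.
Local Open Scope ring_scope.
Local Open Scope complex_scope.

Section QDefs.
Variable R : realType.
Local Notation C := R[i].

Definition adjmx {m n} (A : 'M[C]_(m, n)) : 'M[C]_(n, m) := (map_mx Num.conj A)^T.

Definition unit_vec {D} (psi : 'cV[C]_D) : Prop := adjmx psi *m psi = 1%:M.

Definition proj {D} (psi : 'cV[C]_D) : 'M[C]_D := psi *m adjmx psi.

Definition Omega {D} (lam : R) (psi : 'cV[C]_D) : 'M[C]_D :=
  proj psi + (lam%:C) *: (1%:M - proj psi).

Definition psd {n} (A : 'M[C]_n) : Prop :=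
  adjmx A = A /\ forall v : 'cV[C]_n, 0 <= (adjmx v *m A *m v) 0 0.

Definition density {n} (rho : 'M[C]_n) : Prop := psd rho /\ \tr rho = 1.

Definition swap_op D : 'M[C]_(D * D) :=
  \matrix_(k, l) ((((mxtens_unindex k).1 == (mxtens_unindex l).2) &&
                   ((mxtens_unindex k).2 == (mxtens_unindex l).1))%:R).

(* permutation invariance on H^{(x)2}: invariance under the only nontrivial
   permutation of S_2, the swap of the two tensor factors *)
Definition perm_invariant2 D (rho : 'M[C]_(D * D)) : Prop :=
  swap_op D *m rho *m swap_op D = rho.

Definition p_rho {D} (lam : R) (psi : 'cV[C]_D) (rho : 'M[C]_(D * D)) : C :=
  \tr ((Omega lam psi *t (1%:M : 'M[C]_D)) *m rho).
Definition f_rho {D} (lam : R) (psi : 'cV[C]_D) (rho : 'M[C]_(D * D)) : C :=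
  \tr ((Omega lam psi *t proj psi) *m rho).

Definition feasible1 {D} (lam delta : R) (psi : 'cV[C]_D) (rho : 'M[C]_(D * D)) : Prop :=
  density rho /\ perm_invariant2 rho /\ delta%:C <= p_rho lam psi rho.

Definition zeta1_is {D} (lam delta : R) (psi : 'cV[C]_D) (z : R) : Prop :=
  (exists rho, feasible1 lam delta psi rho /\ f_rho lam psi rho = z%:C) /\
  (forall rho, feasible1 lam delta psi rho -> z%:C <= f_rho lam psi rho).

End QDefs.

(* Write P = |Psi><Psi| and Q = 1 - P.  A swap-invariant state rho is seen by
   p_rho and f_rho only through its weights a = tr((P (x) P) rho),
   b = tr((P (x) Q) rho) = tr((Q (x) P) rho) and c = tr((Q (x) Q) rho), which are
   nonnegative with a + 2b + c = 1; then p_rho = a + (1 + lam) b + lam c and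
   f_rho = a + lam b.  Conversely every such triple is realised by a combination of
   P (x) P, P (x) Q + Q (x) P and Q (x) Q.  Hence zeta(1, delta, lam) is the value of a
   linear program in (a, b, c), whose optimum sits at the vertex (0, 0, 1), (0, t, 1 - 2t)
   or (2t - 1, 1 - t, 0), where t = (delta - lam) / (1 - lam). *)

From mathcomp Require Import all_boot all_order all_algebra.
From mathcomp Require Import fingroup perm reals complex mxtens ring lra.
Set Implicit Arguments. Unset Strict Implicit. Unset Printing Implicit Defensive.
Import Order.TTheory GRing.Theory Num.Theory.
Local Open Scope ring_scope.
Local Open Scope complex_scope.

Section TensorProduct.
Variable R : comPzRingType.

Lemma tensmxDl m n p q (A A' : 'M[R]_(m, n)) (B : 'M[R]_(p, q)) :
  (A + A') *t B = A *t B + A' *t B.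
Proof. by apply/matrixP=> i j; rewrite !mxE mulrDl. Qed.

Lemma tensmxDr m n p q (A : 'M[R]_(m, n)) (B B' : 'M[R]_(p, q)) :
  A *t (B + B') = A *t B + A *t B'.
Proof. by apply/matrixP=> i j; rewrite !mxE mulrDr. Qed.

Lemma tensmxZl m n p q c (A : 'M[R]_(m, n)) (B : 'M[R]_(p, q)) :
  (c *: A) *t B = c *: (A *t B).
Proof. by apply/matrixP=> i j; rewrite !mxE mulrA. Qed.

Lemma tensmx11 m n : (1%:M : 'M[R]_m) *t (1%:M : 'M[R]_n) = 1%:M.
Proof.
apply/matrixP=> i j; rewrite !mxE -natrM mulnb -xpair_eqE -!surjective_pairing.
by rewrite (can_eq (@mxtens_unindexK m n)).
Qed.

Lemma mxtrace_tens m n (A : 'M[R]_m) (B : 'M[R]_n) : \tr (A *t B) = \tr A * \tr B.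
Proof. by rewrite /mxtrace mulr_sum; apply: eq_bigr => k _; rewrite mxE. Qed.

End TensorProduct.

Definition swap_index D (k : 'I_(D * D)) : 'I_(D * D) :=
  mxtens_index ((mxtens_unindex k).2, (mxtens_unindex k).1).

Arguments swap_index {D}.

Lemma swap_indexK D : involutive (@swap_index D).
Proof. by move=> k; rewrite /swap_index mxtens_indexK mxtens_unindexK. Qed.

Definition swap_perm D : 'S_(D * D) := perm (inv_inj (@swap_indexK D)).

Lemma swap_permV D : ((swap_perm D)^-1)%g = swap_perm D.
Proof.
apply/permP=> k; apply: (@perm_inj _ (swap_perm D)).
by rewrite permKV !permE swap_indexK.
Qed.

Section Swap.
Variables (R : realType) (D : nat).
Local Notation C := R[i].

Lemma swap_op_perm_mx : swap_op R D = perm_mx (swap_perm D).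
Proof.
apply/matrixP=> k l; rewrite !mxE permE /swap_index.
rewrite -(can_eq (@mxtens_unindexK D D)) mxtens_indexK.
by rewrite [mxtens_unindex l]surjective_pairing xpair_eqE andbC ![_ == (_).1]eq_sym.
Qed.

Lemma swap_op_conjE (A : 'M[C]_(D * D)) k l :
  (swap_op R D *m A *m swap_op R D) k l = A (swap_index k) (swap_index l).
Proof.
by rewrite swap_op_perm_mx -row_permE -{2}swap_permV -col_permE !mxE !permE.
Qed.

Lemma swap_op_tens (A B : 'M[C]_D) : swap_op R D *m (A *t B) *m swap_op R D = B *t A.
Proof.
by apply/matrixP=> k l; rewrite swap_op_conjE !mxE !mxtens_indexK /= mulrC.
Qed.

Lemma mxtrace_tens_swap (A B : 'M[C]_D) rho :
  perm_invariant2 rho -> \tr ((B *t A) *m rho) = \tr ((A *t B) *m rho).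
Proof.
rewrite /perm_invariant2 => rho_inv.
by rewrite -swap_op_tens -{2}rho_inv !mulmxA [RHS]mxtrace_mulC !mulmxA.
Qed.
End Swap.

Section Adjoint.
Variable R : realType.
Local Notation C := R[i].

Lemma adjmxM m n p (A : 'M[C]_(m, n)) (B : 'M[C]_(n, p)) :
  adjmx (A *m B) = adjmx B *m adjmx A.
Proof. by rewrite /adjmx map_mxM trmx_mul. Qed.

Lemma adjmxD m n (A B : 'M[C]_(m, n)) : adjmx (A + B) = adjmx A + adjmx B.
Proof. by apply/matrixP=> i j; rewrite !mxE rmorphD. Qed.

Lemma adjmxN m n (A : 'M[C]_(m, n)) : adjmx (- A) = - adjmx A.
Proof. by apply/matrixP=> i j; rewrite !mxE rmorphN. Qed.

Lemma adjmxZ m n c (A : 'M[C]_(m, n)) : adjmx (c *: A) = c^* *: adjmx A.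
Proof. by apply/matrixP=> i j; rewrite !mxE rmorphM. Qed.

Lemma adjmx1 n : adjmx (1%:M : 'M[C]_n) = 1%:M.
Proof. by apply/matrixP=> i j; rewrite !mxE eq_sym conjC_nat. Qed.

Lemma adjmxK m n (A : 'M[C]_(m, n)) : adjmx (adjmx A) = A.
Proof. by apply/matrixP=> i j; rewrite !mxE conjCK. Qed.

Lemma adjmx_tens m n p q (A : 'M[C]_(m, n)) (B : 'M[C]_(p, q)) :
  adjmx (A *t B) = adjmx A *t adjmx B.
Proof. by rewrite /adjmx map_mxT trmx_tens. Qed.

Lemma adjmx_mul_self_ge0 n (v : 'cV[C]_n) : 0 <= (adjmx v *m v) 0 0.
Proof. by rewrite mxE; apply: sumr_ge0 => i _; rewrite !mxE mulrC mul_conjC_ge0. Qed.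

Lemma psd_gram m n (Y : 'M[C]_(m, n)) : psd (Y *m adjmx Y).
Proof.
split=> [|v]; first by rewrite adjmxM adjmxK.
by rewrite -!mulmxA mulmxA -[adjmx v *m Y]adjmxK adjmxM adjmxK adjmx_mul_self_ge0.
Qed.

Lemma psdD n (A B : 'M[C]_n) : psd A -> psd B -> psd (A + B).
Proof.
move=> [hA pA] [hB pB]; split=> [|v]; first by rewrite adjmxD hA hB.
by rewrite mulmxDr mulmxDl mxE addr_ge0.
Qed.

Lemma psdZ n c (A : 'M[C]_n) : 0 <= c -> psd A -> psd (c *: A).
Proof.
move=> c_ge0 [hA pA]; split=> [|v]; first by rewrite adjmxZ hA geC0_conj.
by rewrite -scalemxAr -scalemxAl mxE mulr_ge0.
Qed.

Lemma mxtrace_gram_mul_ge0 m n (Y : 'M[C]_(m, n)) rho :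
  psd rho -> 0 <= \tr (Y *m adjmx Y *m rho).
Proof.
move=> [_ rho_ge0]; rewrite -mulmxA mxtrace_mulC; apply: sumr_ge0 => k _.
have -> : (adjmx Y *m rho *m Y) k k = (adjmx (col k Y) *m rho *m col k Y) 0 0.
  rewrite !mxE; apply: eq_bigr => j _; rewrite !mxE; congr (_ * _).
  by apply: eq_bigr => l _; rewrite !mxE.
exact: rho_ge0.
Qed.

Definition orthoproj {n} (P : 'M[C]_n) : Prop := adjmx P = P /\ P *m P = P.

Lemma orthoproj_gram n (P : 'M[C]_n) : orthoproj P -> P = P *m adjmx P.
Proof. by case=> -> ->. Qed.

Lemma orthoproj_psd n (P : 'M[C]_n) : orthoproj P -> psd P.
Proof. by move/orthoproj_gram->; exact: psd_gram. Qed.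

Lemma mxtrace_orthoproj_mul_ge0 n (P rho : 'M[C]_n) :
  orthoproj P -> psd rho -> 0 <= \tr (P *m rho).
Proof. by move/orthoproj_gram->; exact: mxtrace_gram_mul_ge0. Qed.

Lemma orthoproj_tens m n (P : 'M[C]_m) (P' : 'M[C]_n) :
  orthoproj P -> orthoproj P' -> orthoproj (P *t P').
Proof. by case=> hP PP [hP' PP']; rewrite /orthoproj adjmx_tens tensmx_mul hP hP' PP PP'. Qed.

Lemma orthoprojC n (P : 'M[C]_n) : orthoproj P -> orthoproj (1%:M - P).
Proof.
case=> hP PP; rewrite /orthoproj adjmxD adjmxN adjmx1 hP.
by rewrite mulmxBl mul1mx mulmxBr mulmx1 PP subrr subr0.
Qed.

Lemma orthoproj_proj n (psi : 'cV[C]_n) : unit_vec psi -> orthoproj (proj psi).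
Proof.
move=> psi_unit; split; first by rewrite /proj adjmxM adjmxK.
by rewrite /proj mulmxA -(mulmxA psi) psi_unit mulmx1.
Qed.

Lemma mxtrace_proj n (psi : 'cV[C]_n) : unit_vec psi -> \tr (proj psi) = 1.
Proof. by move=> psi_unit; rewrite /proj mxtrace_mulC psi_unit mxtrace1. Qed.

End Adjoint.

Lemma complex_ge0P (R : realType) (x : R[i]) : 0 <= x -> exists2 r : R, 0 <= r & x = r%:C.
Proof.
move=> x_ge0; have := ger0_Im x_ge0; move: x_ge0; case: x => a b /= a_ge0 b0.
by rewrite b0 in a_ge0 *; exists a; rewrite -?ler0c.
Qed.

Section ComplementaryProjections.
Variables (R : realType) (D : nat) (P Q : 'M[R[i]]_D).
Hypotheses (P_orthoproj : orthoproj P) (PQ1 : P + Q = 1%:M).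
Local Notation C := R[i].

Let QE : Q = 1%:M - P. Proof. by rewrite -PQ1 addrC addKr. Qed.

Let Q_orthoproj : orthoproj Q. Proof. by rewrite QE; exact: orthoprojC. Qed.

Let PQ0 : P *m Q = 0.
Proof. by case: P_orthoproj => _ PP; rewrite QE mulmxBr mulmx1 PP subrr. Qed.

Let QP0 : Q *m P = 0.
Proof. by case: P_orthoproj => _ PP; rewrite QE mulmxBl mul1mx PP subrr. Qed.

Lemma mxtrace_tens_decomp (l : C) (rho : 'M[C]_(D * D)) :
  [/\ \tr (((P + l *: Q) *t 1%:M) *m rho) =
        \tr ((P *t P) *m rho) + \tr ((P *t Q) *m rho)
        + l * \tr ((Q *t P) *m rho) + l * \tr ((Q *t Q) *m rho),
      \tr (((P + l *: Q) *t P) *m rho) = \tr ((P *t P) *m rho) + l * \tr ((Q *t P) *m rho)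
    & \tr rho = \tr ((P *t P) *m rho) + \tr ((P *t Q) *m rho)
        + \tr ((Q *t P) *m rho) + \tr ((Q *t Q) *m rho)].
Proof.
split.
- rewrite -PQ1 !(tensmxDl, tensmxDr, tensmxZl) !mulmxDl -!scalemxAl.
  by rewrite !(mxtraceD, mxtraceZ) !addrA.
- by rewrite !(tensmxDl, tensmxZl) !mulmxDl -!scalemxAl !(mxtraceD, mxtraceZ).
- rewrite -{1}[rho]mul1mx -tensmx11 -PQ1 !(tensmxDl, tensmxDr) !mulmxDl.
  by rewrite !mxtraceD !addrA.
Qed.

Lemma perm_invariant_state_weights (lam : R) (rho : 'M[C]_(D * D)) :
  density rho -> perm_invariant2 rho ->
  exists a b c : R, [/\ 0 <= a, 0 <= b, 0 <= c & a + 2 * b + c = 1] /\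
    \tr (((P + lam%:C *: Q) *t 1%:M) *m rho) = (a + (1 + lam) * b + lam * c)%:C /\
    \tr (((P + lam%:C *: Q) *t P) *m rho) = (a + lam * b)%:C.
Proof.
move=> [rho_psd rho_tr1] rho_inv.
have weight_ge0 X Z : orthoproj X -> orthoproj Z -> 0 <= \tr ((X *t Z) *m rho).
  by move=> hX hZ; apply: mxtrace_orthoproj_mul_ge0 => //; exact: orthoproj_tens.
have [a a_ge0 aE] := complex_ge0P (weight_ge0 _ _ P_orthoproj P_orthoproj).
have [b b_ge0 bE] := complex_ge0P (weight_ge0 _ _ P_orthoproj Q_orthoproj).
have [c c_ge0 cE] := complex_ge0P (weight_ge0 _ _ Q_orthoproj Q_orthoproj).
have [pE fE trE] := mxtrace_tens_decomp lam%:C rho.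
rewrite (mxtrace_tens_swap P Q rho_inv) aE bE cE in pE fE trE.
exists a, b, c; rewrite pE fE !(rmorphD, rmorphM, rmorph1); split; [split=> // | split; ring].
by apply: (@complexI R); rewrite rmorph1 -rho_tr1 trE !(rmorphD, rmorphM, rmorph_nat); ring.
Qed.

Definition weighted_state (a b c d : R) : 'M[C]_(D * D) :=
  a%:C *: (P *t P) + (b / d)%:C *: (P *t Q + Q *t P) + (c / (d * d))%:C *: (Q *t Q).

Lemma weighted_state_psd (a b c d : R) :
  0 <= a -> 0 <= b -> 0 <= c -> 0 <= d -> psd (weighted_state a b c d).
Proof.
move=> a_ge0 b_ge0 c_ge0 d_ge0.
have psd_PP := orthoproj_psd (orthoproj_tens P_orthoproj P_orthoproj).
have psd_PQ := orthoproj_psd (orthoproj_tens P_orthoproj Q_orthoproj).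
have psd_QP := orthoproj_psd (orthoproj_tens Q_orthoproj P_orthoproj).
have psd_QQ := orthoproj_psd (orthoproj_tens Q_orthoproj Q_orthoproj).
rewrite /weighted_state; apply: psdD; [apply: psdD|]; apply: psdZ;
  by rewrite ?ler0c ?divr_ge0 ?mulr_ge0 //; exact: psdD.
Qed.

Lemma weighted_state_perm_invariant (a b c d : R) : perm_invariant2 (weighted_state a b c d).
Proof.
rewrite /perm_invariant2 /weighted_state !(mulmxDr, mulmxDl) -!(scalemxAr, scalemxAl).
by rewrite !(mulmxDr, mulmxDl) !swap_op_tens [Q *t P + _]addrC.
Qed.

Lemma weighted_state_weights (a b c d : R) : \tr P = 1 -> \tr Q = d%:C -> d != 0 ->
  let rho := weighted_state a b c d in
  [/\ \tr ((P *t P) *m rho) = a%:C, \tr ((P *t Q) *m rho) = b%:C,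
      \tr ((Q *t P) *m rho) = b%:C & \tr ((Q *t Q) *m rho) = c%:C].
Proof.
move=> trP trQ d_neq0; have [_ PP] := P_orthoproj; have [_ QQ] := Q_orthoproj.
rewrite /weighted_state !mulmxDr -!scalemxAr !mulmxDr !tensmx_mul PP QQ PQ0 QP0.
rewrite !(tensmx0, tens0mx, scaler0, addr0, add0r) !(mxtraceZ, mxtrace_tens) trP trQ.
by rewrite -!rmorphM !(mul1r, mulr1) !divfK ?mulf_neq0.
Qed.

Lemma perm_invariant_state_of_weights (lam d a b c : R) :
  \tr P = 1 -> \tr Q = d%:C -> 0 < d ->
  [/\ 0 <= a, 0 <= b, 0 <= c & a + 2 * b + c = 1] ->
  exists rho : 'M[C]_(D * D), [/\ density rho, perm_invariant2 rho,
    \tr (((P + lam%:C *: Q) *t 1%:M) *m rho) = (a + (1 + lam) * b + lam * c)%:C &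
    \tr (((P + lam%:C *: Q) *t P) *m rho) = (a + lam * b)%:C].
Proof.
move=> trP trQ d_gt0 [a_ge0 b_ge0 c_ge0 abc1].
have [wPP wPQ wQP wQQ] := weighted_state_weights a b c trP trQ (lt0r_neq0 d_gt0).
have [pE fE trE] := mxtrace_tens_decomp lam%:C (weighted_state a b c d).
exists (weighted_state a b c d); split.
- split; first exact: weighted_state_psd (ltW d_gt0).
  rewrite trE wPP wPQ wQP wQQ -(rmorph1 (real_complex R)) -abc1.
  by rewrite !(rmorphD, rmorphM, rmorph_nat); ring.
- exact: weighted_state_perm_invariant.
- by rewrite pE wPP wPQ wQP wQQ !(rmorphD, rmorphM, rmorph1); ring.
- by rewrite fE wPP wQP !(rmorphD, rmorphM).
Qed.

End ComplementaryProjections.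

Section LinearProgram.
Variables (R : realFieldType) (lam delta : R).
Hypotheses (lam_ge0 : 0 <= lam) (lam_lt1 : lam < 1).

Definition zeta1_formula : R :=
  Num.max 0 (Num.max (lam * (delta - lam) / (1 - lam))
                     ((delta * (2 - lam) - 1) / (1 - lam))).

Let lam1_gt0 : 0 < 1 - lam. Proof. by rewrite subr_gt0. Qed.
Let lam1_neq0 : 1 - lam != 0. Proof. by rewrite gt_eqF. Qed.
Let lam2_ge0 : 0 <= 2 - lam.
Proof. by rewrite subr_ge0 (le_trans (ltW lam_lt1)) ?ler1n. Qed.

Lemma zeta1_formula_le (a b c : R) :
  [/\ 0 <= a, 0 <= b, 0 <= c & a + 2 * b + c = 1] ->
  delta <= a + (1 + lam) * b + lam * c -> zeta1_formula <= a + lam * b.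
Proof.
move=> [a_ge0 b_ge0 c_ge0 abc1] p_ge; rewrite !ge_max !ler_pdivrMr //.
have a_sq : 0 <= a * (1 - lam) ^+ 2 by rewrite mulr_ge0 ?sqr_ge0.
have c_sq : 0 <= c * (1 - lam) ^+ 2 by rewrite mulr_ge0 ?sqr_ge0.
have lam_b : 0 <= lam * b by rewrite mulr_ge0.
have p_ge1 := ler_wpM2l lam_ge0 p_ge.
have p_ge2 := ler_wpM2l lam2_ge0 p_ge.
by apply/and3P; split; [lra | nra | nra].
Qed.

Lemma zeta1_formula_cases :
  [/\ delta <= lam -> zeta1_formula = 0,
      lam <= delta -> delta <= (1 + lam) / 2 ->
        zeta1_formula = lam * (delta - lam) / (1 - lam)
    & (1 + lam) / 2 <= delta ->
        zeta1_formula = (delta * (2 - lam) - 1) / (1 - lam)].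
Proof.
rewrite /zeta1_formula; set u := lam * _ / _; set v := (_ - 1) / _.
have lam1_ge0 := ltW lam1_gt0; split.
- move=> d_le; apply/max_idPl; rewrite ge_max !ler_pdivrMr // !mul0r.
  have d_le1 := ler_wpM2l lam_ge0 d_le; have d_le2 := ler_wpM2r lam2_ge0 d_le.
  have lam1_sq := sqr_ge0 (1 - lam).
  by apply/andP; split; nra.
- move=> d_ge d_le; have d_le' : 2 * delta <= 1 + lam by lra.
  have d_le2 := ler_wpM2l lam1_ge0 d_le'.
  have v_le_u : v <= u by rewrite ler_pM2r ?invr_gt0 //; nra.
  by rewrite (max_idPl v_le_u); apply/max_idPr; rewrite divr_ge0 // mulr_ge0 // subr_ge0.
- move=> d_ge; have d_ge' : 1 + lam <= 2 * delta by lra.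
  have d_ge1 := ler_wpM2l lam1_ge0 d_ge'; have d_ge2 := ler_wpM2r lam2_ge0 d_ge'.
  have lam_lam1 : 0 <= lam * (1 - lam) by rewrite mulr_ge0.
  have u_le_v : u <= v by rewrite ler_pM2r ?invr_gt0 //; nra.
  by rewrite (max_idPr u_le_v); apply/max_idPr; apply: divr_ge0 => //; nra.
Qed.

Lemma zeta1_formula_lp_attained :
  0 <= delta -> delta <= 1 ->
  exists a b c : R, [/\ 0 <= a, 0 <= b, 0 <= c & a + 2 * b + c = 1] /\
    delta <= a + (1 + lam) * b + lam * c /\ a + lam * b = zeta1_formula.
Proof.
move=> d_ge0 d_le1; have [z_low z_mid z_high] := zeta1_formula_cases.
have [d_le|lam_lt] := lerP delta lam.
  by exists 0, 0, 1; rewrite z_low //; do !split => //; lra.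
set t := (delta - lam) / (1 - lam).
have tE : t * (1 - lam) = delta - lam by rewrite divfK.
have t_ge0 : 0 <= t by rewrite divr_ge0 ?subr_ge0 ?ltW.
have t_le1 : t <= 1 by rewrite ler_pdivrMr // mul1r lerD2r.
have [d_le|d_gt] := lerP delta ((1 + lam) / 2).
  have t_le_half : 2 * t <= 1 by rewrite mulrC -ler_pdivlMr // ler_pdivrMr //; lra.
  exists 0, t, (1 - 2 * t); rewrite (z_mid (ltW lam_lt) d_le) -mulrA -/t.
  by do !split; lra.
have t_ge_half : 1 <= 2 * t by rewrite mulrC -ler_pdivrMr // ler_pdivlMr //; lra.
exists (2 * t - 1), (1 - t), 0; rewrite (z_high (ltW d_gt)).
do !split; try lra.
apply: (mulIf lam1_neq0); rewrite divfK //.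
have -> : (2 * t - 1 + lam * (1 - t)) * (1 - lam) = t * (1 - lam) * (2 - lam) - (1 - lam) ^+ 2.
  by ring.
by rewrite tE; ring.
Qed.

End LinearProgram.

Section Zeta1.
Variables (R : realType) (D : nat) (psi : 'cV[R[i]]_D) (lam delta : R).
Hypotheses (psi_unit : unit_vec psi) (lam_ge0 : 0 <= lam) (lam_lt1 : lam < 1).

Let P_orthoproj : orthoproj (proj psi). Proof. exact: orthoproj_proj. Qed.
Let PQ1 : proj psi + (1%:M - proj psi) = 1%:M. Proof. by rewrite addrC subrK. Qed.

Lemma f_rho_ge_zeta1_formula rho :
  feasible1 lam delta psi rho -> (zeta1_formula lam delta)%:C <= f_rho lam psi rho.
Proof.
move=> [rho_dens [rho_inv]].
have [a [b [c [abc [pE fE]]]]] :=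
  perm_invariant_state_weights P_orthoproj PQ1 lam rho_dens rho_inv.
rewrite /p_rho /f_rho /Omega pE fE !lecR.
exact: zeta1_formula_le.
Qed.

Lemma zeta1_formula_state_attained :
  (2 <= D)%N -> 0 <= delta -> delta <= 1 ->
  exists rho, feasible1 lam delta psi rho /\ f_rho lam psi rho = (zeta1_formula lam delta)%:C.
Proof.
move=> D_ge2 d_ge0 d_le1.
have [a [b [c [abc [p_ge f_eq]]]]] := zeta1_formula_lp_attained lam_ge0 lam_lt1 d_ge0 d_le1.
have trQ : \tr (1%:M - proj psi) = (D%:R - 1 : R)%:C.
  by rewrite linearB /= mxtrace1 mxtrace_proj // rmorphB rmorph1 rmorph_nat.
have d_gt0 : 0 < D%:R - 1 :> R by rewrite subr_gt0 ltr1n.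
have [rho [rho_dens rho_inv pE fE]] :=
  perm_invariant_state_of_weights P_orthoproj PQ1 lam (mxtrace_proj psi_unit) trQ d_gt0 abc.
exists rho; rewrite /feasible1 /p_rho /f_rho /Omega pE fE lecR f_eq.
by split=> //; split=> //; split.
Qed.

End Zeta1.

Theorem proposition2 (R : realType) (D : nat) (psi : 'cV[R[i]]_D) (lam delta : R) :
  (2 <= D)%N -> unit_vec psi ->
  0 <= lam -> lam < 1 -> 0 <= delta -> delta <= 1 ->
  let z := Num.max 0 (Num.max (lam * (delta - lam) / (1 - lam))
                              ((delta * (2 - lam) - 1) / (1 - lam))) in
  zeta1_is lam delta psi z /\
  (delta <= lam -> z = 0) /\
  (lam <= delta -> delta <= (1 + lam) / 2 -> z = lam * (delta - lam) / (1 - lam)) /\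
  ((1 + lam) / 2 <= delta -> z = (delta * (2 - lam) - 1) / (1 - lam)).
Proof.
move=> D_ge2 psi_unit lam_ge0 lam_lt1 delta_ge0 delta_le1 z.
have [z_low z_mid z_high] := zeta1_formula_cases delta lam_ge0 lam_lt1.
split; last by split; [exact: z_low | split; [exact: z_mid | exact: z_high]].
split; first exact: zeta1_formula_state_attained.
exact: f_rho_ge_zeta1_formula.
Qed.
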